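(* In the setting and notation of the context, for every $t\in\{1,\dots,n-1\}$, $$\textsf{ALG}_{t+1}\ \ge\ \beta_t\ \ge\ \frac{1}{\phi^2}\mathbb{E}[y_t]\ =\ \frac1\phi\,\alpha_t,$$ where $\textsf{ALG}_{t+1}$ is the expected value accepted by $\textsf{ALG}$ when run only on boxes $t+1,\dots,n$ (arriving in this order).
   Context: There are $n$ boxes arriving in order $1,2,\dots,n$; box $s$ contains an independent nonnegative value $v_s\sim F_s$ with finite expectation. $\phi=\frac{1+\sqrt5}{2}$. For each $t$, $y_t=\max_{s>t}v_s$ ($y_n=0$), $\alpha_t=\frac1\phi\mathbb{E}[y_t]$, and $\beta_t$ is the unique $x\ge0$ solving $\mathbb{E}[(y_t-\phi x)^+]=x$ (so $\alpha_n=\beta_n=0$). The algorithm $\textsf{ALG}$ scans the boxes in arrival order and accepts (and stops at) the first box $t$ whose realized value $\theta_t$ satisfies $\theta_t\ge\tau_t:=\max(\alpha_t,\beta_t)$; it receives $0$ if it accepts nothing. When $\textsf{ALG}$ is run only on boxes $t+1,\dots,n$, it uses the same thresholds $\tau_{t+1},\dots,\tau_n$. *)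

From HB Require Import structures.
From mathcomp Require Import all_boot all_order all_algebra.
From mathcomp Require Import all_classical all_reals all_analysis.
Set Implicit Arguments. Unset Strict Implicit. Unset Printing Implicit Defensive.
Import Order.TTheory GRing.Theory Num.Theory.
Local Open Scope ring_scope.
Local Open Scope classical_set_scope.

Definition phi (R : realType) : R := (1 + Num.sqrt 5) / 2.

Definition Expect d (T : measurableType d) (R : realType) (P : probability T R)
  (f : T -> R) : \bar R := (\int[P]_w (f w)%:E)%E.

(* Mutual independence of the random variables X 1, ..., X n (boxes 1..n):
   product rule for every family of Borel sets (taking B i = setT for some i
   gives the product rule for every subfamily). *)
Definition mutually_independent d (T : measurableType d) (R : realType)
  (P : probability T R) (n : nat) (X : nat -> {RV P >-> R}) : Prop :=
  forall B : nat -> set R, (forall i, measurable (B i)) ->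
  P (\bigcap_(i in [set i : nat | (1 <= i <= n)%N]) (X i @^-1` B i)) =
  (\prod_(1 <= i < n.+1) P (X i @^-1` B i))%E.

Definition ymax d (T : measurableType d) (R : realType) (P : probability T R)
  (n : nat) (X : nat -> {RV P >-> R}) (t : nat) (w : T) : R :=
  \big[Num.max/0]_(t.+1 <= s < n.+1) X s w.

(* alpha_t = (1/phi) E[y_t]  (E[y_t] is finite since the v_s have finite mean) *)
Definition alpha d (T : measurableType d) (R : realType) (P : probability T R)
  (n : nat) (X : nat -> {RV P >-> R}) (t : nat) : R :=
  (phi R)^-1 * fine (Expect P (ymax n X t)).

Fixpoint algv d (T : measurableType d) (R : realType) (P : probability T R)
  (X : nat -> {RV P >-> R}) (tau : nat -> R) (m k : nat) (w : T) : R :=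
  match m with
  | 0 => 0
  | m'.+1 => if tau k <= X k w then X k w else algv X tau m' k.+1 w
  end.

Arguments Expect {d T R} P f.
Arguments mutually_independent {d T R} P n X.
Arguments ymax {d T R P} n X t w.
Arguments alpha {d T R} P n X t.
Arguments algv {d T R P} X tau m k w.

From HB Require Import structures.
From mathcomp Require Import all_boot all_order all_algebra.
From mathcomp Require Import all_classical all_reals all_analysis measurable_realfun.
From mathcomp Require Import lra zify.
Import Order.TTheory GRing.Theory Num.Theory.
Local Open Scope ring_scope.
Local Open Scope classical_set_scope.

(* Since beta_t solves E[(y_t - phi x)^+] = x,
     E[y_t] <= E[(y_t - phi beta_t)^+] + phi beta_t = (1 + phi) beta_t
             = phi^2 beta_t,
   which is the middle inequality and also gives alpha_t <= phi beta_t.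
   The bound beta_t <= ALG_(t+1) is proved backwards in t.  Put j = t + 1,
   v = v_j and b = beta_j <= tau_j.  The box v is independent of what the
   algorithm collects from boxes j+1, ..., n, so by induction (b <= ALG_(j+1))
     ALG_j = E[(v - b) 1{v >= tau_j}] + b P(v >= tau_j) + P(v < tau_j) ALG_(j+1)
           >= E[(v - b) 1{v >= tau_j}] + b.
   If beta_t > b then tau_j <= phi beta_t, and pointwise
     (max(v, y_j) - phi beta_t)^+ <= (v - b) 1{v >= tau_j} + (y_j - phi b)^+;
   taking expectations gives beta_t <= ALG_j.  The independence step
   integrates the tail probabilities P(ALG_(j+1) > r) (layer-cake formula);
   each event {ALG_(j+1) > r} is a disjoint union of cylinder events in the
   later boxes. *)

Lemma phi_gt1 (R : realType) : 1 < phi R.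
Proof.
have s1 : 1 < Num.sqrt 5 :> R.
  by rewrite -[X in X < _]sqrtr1 ltr_sqrt; lra.
rewrite /phi ltr_pdivlMr //; lra.
Qed.

Lemma sqr_phi (R : realType) : phi R ^+ 2 = 1 + phi R.
Proof.
have s5 : Num.sqrt 5 ^+ 2 = 5 :> R by rewrite sqr_sqrtr // ler0n.
rewrite /phi expr2; rewrite expr2 in s5; nra.
Qed.

Lemma max_sub_le_split (R : realDomainType) (v y b t r s : R) :
  0 <= y -> b <= t <= r -> s <= r ->
  Num.max (Num.max v y - r) 0 <=
  (if t <= v then v - b else 0) + Num.max (y - s) 0.
Proof.
move=> y0 /andP[bt tr] sr; rewrite ge_max; apply/andP; split; last first.
  by apply: addr_ge0; [case: ifP => // tv; lra|rewrite le_max lexx orbT].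
have ys : y - r <= Num.max (y - s) 0 by rewrite le_max; apply/orP; left; lra.
have s0 : 0 <= Num.max (y - s) 0 by rewrite le_max lexx orbT.
case: (lerP v y) => [vy|yv]; case: ifP => tv; rewrite ?add0r; lra.
Qed.

Section tail_integral.
Context {d} {T : measurableType d} {R : realType} {P : probability T R}.
Local Open Scope ereal_scope.

Lemma measurable_tail {f : T -> R} : measurable_fun setT f ->
  measurable_fun [set: R] (fun r : R => P (f @^-1` `]r, +oo[)).
Proof.
by move=> mf; exact: (@ccdf_measurable _ _ _ P (mfun_Sub (mem_set mf))).
Qed.

Lemma ge0_integral_tail (f : T -> R) : measurable_fun setT f ->
  (forall w, 0 <= f w)%R ->
  \int[P]_w (f w)%:E =
  \int[lebesgue_measure]_(r in `[0%R, +oo[) P (f @^-1` `]r, +oo[).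
Proof.
move=> mf f0; have := @ge0_expectation_ccdf _ _ _ P (mfun_Sub (mem_set mf)) f0.
by rewrite expectation_def.
Qed.

Lemma ge0_integral_indep (f : T -> R) (A : set T) : measurable A ->
  measurable_fun setT f -> (forall w, 0 <= f w)%R ->
  (forall r, (0 <= r)%R ->
     P (A `&` f @^-1` `]r, +oo[) = P A * P (f @^-1` `]r, +oo[)) ->
  \int[P]_(w in A) (f w)%:E = P A * \int[P]_w (f w)%:E.
Proof.
move=> mA mf f0 indep.
pose g w := (f w * \1_A w)%R.
have mg : measurable_fun setT g.
  by apply: measurable_funM => //; exact: measurable_indic.
have g0 w : (0 <= g w)%R by rewrite mulr_ge0 // indicE.
have -> : \int[P]_(w in A) (f w)%:E = \int[P]_w (g w)%:E.
  rewrite integral_mkcond; apply: eq_integral => w _.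
  by rewrite patchE /g indicE; case: ifP => _; rewrite ?mulr1 ?mulr0.
rewrite !ge0_integral_tail // -ge0_integralZl //; last first.
  exact: measurable_funS measurableT _ (measurable_tail mf).
apply: eq_integral => r /[!inE] /= /[!in_itv] /= /andP[r0 _]; rewrite -indep //.
congr (P _); apply/seteqP; split => w /=; rewrite /g !in_itv /= !andbT indicE.
- case: (boolP (w \in A)) => [/set_mem Aw|_]; rewrite ?mulr1 ?mulr0 //.
  by rewrite ltNge r0.
- by move=> [Aw fw]; rewrite mem_set // mulr1.
Qed.

End tail_integral.

Section cylinder.
Context {d} {T : measurableType d} {R : realType} {P : probability T R}
  {n : nat} {X : nat -> {RV P >-> R}}.

Definition cylinder (C : nat -> set R) :=
  \bigcap_(i in [set i : nat | (1 <= i <= n)%N]) (X i @^-1` C i).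

Lemma measurable_cylinder C : (forall i, measurable (C i)) ->
  measurable (cylinder C).
Proof.
by move=> mC; apply: bigcap_measurableType => i _; exact: measurable_funPTI.
Qed.

Lemma cylinder_setT : cylinder (fun=> setT) = setT.
Proof. by apply/seteqP; split => w //= _ i _. Qed.

Lemma cylinder_withI C j G : (1 <= j <= n)%N ->
  cylinder [eta C with j |-> C j `&` G] = cylinder C `&` X j @^-1` G.
Proof.
move=> jn; apply/seteqP; split => w; rewrite /cylinder /=.
- move=> Cw; split; last by have := Cw j jn; rewrite /= eqxx => -[].
  by move=> i i_n; have := Cw i i_n => /=; case: eqP => [->[]|].
- move=> [Cw Gw] i i_n /=; case: eqP => [->|_]; last exact: Cw.
  by split => //; exact: Cw.
Qed.

Hypothesis Xindep : mutually_independent P n X.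

Lemma cylinder_with_indep C k S : (forall i, measurable (C i)) ->
  measurable S -> (1 <= k <= n)%N -> C k = setT ->
  P (cylinder [eta C with k |-> S]) = (P (cylinder C) * P (X k @^-1` S))%E.
Proof.
move=> mC mS kn Ck.
have mCS i : measurable ([eta C with k |-> S] i) by rewrite /=; case: eqP.
rewrite /cylinder !Xindep //.
have kin : k \in index_iota 1 n.+1 by rewrite mem_index_iota ltnS.
rewrite (bigD1_seq k) //= ?iota_uniq // [in RHS](bigD1_seq k) //= ?iota_uniq //.
rewrite /= eqxx Ck preimage_setT probability_setT mul1e muleC.
by congr (_ * _)%E; apply: eq_bigr => i /negbTE ->.
Qed.

End cylinder.
Arguments cylinder {d T R P} n X C.

Section threshold_algorithm.
Context {d} {T : measurableType d} {R : realType} {P : probability T R}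
  {n : nat} {X : nat -> {RV P >-> R}} {tau : nat -> R}.

Lemma measurable_algv m k : measurable_fun setT (algv X tau m k).
Proof.
elim: m k => [|m IH] k /=; first exact: measurable_cst.
apply: measurable_fun_ifT => //.
by apply: measurable_fun_ler => //; exact: measurable_cst.
Qed.

Lemma measurable_algv_gt r m k : measurable (algv X tau m k @^-1` `]r, +oo[).
Proof.
rewrite -[X in measurable X]setTI.
by apply: measurable_algv => //; exact: measurable_itv.
Qed.

Lemma algv_gt_split C r m j : (forall i, measurable (C i)) -> (1 <= j <= n)%N ->
  P (cylinder n X C `&` algv X tau m.+1 j @^-1` `]r, +oo[) =
  (P (cylinder n X [eta C with j |-> C j `&` (`[tau j, +oo[ `&` `]r, +oo[)]) +
   P (cylinder n X [eta C with j |-> C j `&` `]-oo, tau j[] `&`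
      algv X tau m j.+1 @^-1` `]r, +oo[))%E.
Proof.
move=> mC jn; rewrite !cylinder_withI // -measureU; first last.
- apply/seteqP; split => w //=; rewrite !in_itv /= andbT.
  by move=> [[_ [jw _]] [[_]]]; rewrite ltNge jw.
- apply: measurableI; last exact: measurable_algv_gt.
  apply: measurableI; first exact: measurable_cylinder.
  by apply: measurable_funPTI; exact: measurable_itv.
- apply: measurableI; first exact: measurable_cylinder.
  by apply: measurable_funPTI; apply: measurableI; exact: measurable_itv.
congr (P _); apply/seteqP; split => w /=; rewrite !in_itv /= !andbT.
- case: ifP => jw [Cw rw]; first by left.
  by right; rewrite ltNge jw.
- by case=> [[Cw [-> rw]]|[[Cw jw] rw]]; rewrite // leNgt jw.
Qed.

Hypothesis Xindep : mutually_independent P n X.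

(* Peel off box j with algv_gt_split: the first piece is a cylinder event and
   the second falls under the induction hypothesis. *)
Lemma algv_gt_indep r S k : (0 <= r)%R -> measurable S -> (1 <= k <= n)%N ->
  forall m j C, (k < j)%N -> (j + m <= n.+1)%N ->
  (forall i, measurable (C i)) -> C k = setT ->
  P (cylinder n X [eta C with k |-> S] `&` algv X tau m j @^-1` `]r, +oo[) =
  (P (cylinder n X C `&` algv X tau m j @^-1` `]r, +oo[) * P (X k @^-1` S))%E.
Proof.
move=> r0 mS kn; elim=> [|m IH] j C kj jm mC Ck.
  have -> : algv X tau 0 j @^-1` `]r, +oo[ = set0.
    by apply/seteqP; split => w //=; rewrite in_itv /= andbT ltNge r0.
  by rewrite !setI0 measure0 mul0e.
have jn : (1 <= j <= n)%N by lia.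
have jk : j != k by rewrite gt_eqF.
have mCS i : measurable ([eta C with k |-> S] i) by rewrite /=; case: eqP.
rewrite !algv_gt_split //= (negbTE jk) ge0_muleDl ?measure_ge0 //.
have swap G : cylinder n X [eta [eta C with k |-> S] with j |-> G] =
              cylinder n X [eta [eta C with j |-> G] with k |-> S].
  congr cylinder; apply: funext => i /=.
  by case: (eqVneq i j) => [->|//]; rewrite (negbTE jk).
have mCj G : measurable G -> forall i, measurable ([eta C with j |-> G] i).
  by move=> mG i /=; case: eqP.
have Cjk G : [eta C with j |-> G] k = setT by rewrite /= eq_sym (negbTE jk).
rewrite !swap; congr (_ + _)%E.
- apply: (cylinder_with_indep Xindep) => //.
  apply: mCj; apply: measurableI => //.
  by apply: measurableI; exact: measurable_itv.
- apply: IH => //; [lia|lia|].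
  by apply: mCj; apply: measurableI => //; exact: measurable_itv.
Qed.

Lemma algv_gt_indep_box r S j m : (0 <= r)%R -> measurable S ->
  (1 <= j)%N -> (j.+1 + m <= n.+1)%N ->
  P (X j @^-1` S `&` algv X tau m j.+1 @^-1` `]r, +oo[) =
  (P (X j @^-1` S) * P (algv X tau m j.+1 @^-1` `]r, +oo[))%E.
Proof.
move=> r0 mS j1 jm.
have := @algv_gt_indep r S j r0 mS ltac:(lia) m j.+1 (fun=> setT) (ltnSn j) jm
  (fun=> measurableT) erefl.
have -> : [eta (fun=> setT) with j |-> S] =
          [eta (fun=> setT) with j |-> setT `&` S].
  by rewrite setTI.
by rewrite cylinder_withI ?cylinder_setT ?setTI 1?muleC //; lia.
Qed.

End threshold_algorithm.

Section ymax.
Context {d} {T : measurableType d} {R : realType} {P : probability T R}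
  {n : nat} {X : nat -> {RV P >-> R}}.

Lemma ymaxS k w : (k < n)%N ->
  ymax n X k w = Num.max (X k.+1 w) (ymax n X k.+1 w).
Proof. by move=> kn; rewrite /ymax big_ltn // ltnS. Qed.

Lemma ymax_n_eq0 w : ymax n X n w = 0.
Proof. by rewrite /ymax big_geq. Qed.

Lemma ymax_ge0 k w : 0 <= ymax n X k w.
Proof.
rewrite /ymax; elim: (index_iota _ _) => [|i s IH]; first by rewrite big_nil.
by rewrite big_cons le_max IH orbT.
Qed.

Lemma measurable_ymax k : measurable_fun setT (ymax n X k).
Proof.
rewrite /ymax; elim: (index_iota _ _) => [|i s IH].
  by under eq_fun do rewrite big_nil; exact: measurable_cst.
by under eq_fun do rewrite big_cons; exact: measurable_maxr.
Qed.

End ymax.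

Section threshold_guarantee.
Context {d} {T : measurableType d} {R : realType} {P : probability T R}
  {n : nat} {X : nat -> {RV P >-> R}} {beta : nat -> R}.
Hypothesis Xindep : mutually_independent P n X.
Hypothesis Xnneg : forall s w, (1 <= s <= n)%N -> 0 <= X s w.
Hypothesis beta_def : forall t, (1 <= t <= n)%N ->
  0 <= beta t /\
  Expect P (fun w => Num.max (ymax n X t w - phi R * beta t) 0) = (beta t)%:E.

Let measurable_pos_part_ymax k c :
  measurable_fun setT (fun w => (Num.max (ymax n X k w - c) 0)%:E).
Proof.
apply/measurable_EFinP; apply: measurable_maxr; last exact: measurable_cst.
by apply: measurable_funB; [exact: measurable_ymax|exact: measurable_cst].
Qed.

Lemma expect_ymax_le s : (1 <= s <= n)%N ->
  (Expect P (ymax n X s) <= (phi R ^+ 2 * beta s)%:E)%E.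
Proof.
move=> sn; have [b0 bE] := beta_def _ sn; have phi1 := phi_gt1 R.
set c := phi R * beta s.
apply: (@le_trans _ _ (\int[P]_w (Num.max (ymax n X s w - c) 0 + c)%:E)%E).
  apply: ge0_le_integral => //.
  - by move=> w _; rewrite lee_fin ymax_ge0.
  - by apply/measurable_EFinP; exact: measurable_ymax.
  - apply/measurable_EFinP; apply: measurable_funD; last exact: measurable_cst.
    by apply/measurable_EFinP; exact: measurable_pos_part_ymax.
  - by move=> w _; rewrite lee_fin -lerBlDr le_max lexx.
under eq_integral do rewrite EFinD.
rewrite ge0_integralD //; first last.
- by move=> w _; rewrite lee_fin /c mulr_ge0 //; lra.
- by move=> w _; rewrite lee_fin le_max lexx orbT.
rewrite [X in (X + _)%E]bE integral_cst //.
rewrite [X in (_ * X)%E](_ : _ = 1%E); last exact: probability_setT.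
by rewrite mule1 -EFinD lee_fin sqr_phi /c; lra.
Qed.

Lemma expect_ymax_fin s : (1 <= s <= n)%N ->
  Expect P (ymax n X s) \is a fin_num.
Proof.
move=> sn; rewrite ge0_fin_numE; last first.
  by apply: integral_ge0 => w _; rewrite lee_fin ymax_ge0.
exact: le_lt_trans (expect_ymax_le _ sn) (ltry _).
Qed.

Lemma alpha_le_phi_beta s : (1 <= s <= n)%N -> alpha P n X s <= phi R * beta s.
Proof.
move=> sn; have := expect_ymax_le _ sn; have phi1 := phi_gt1 R.
rewrite -(fineK (expect_ymax_fin _ sn)) lee_fin /alpha ler_pdivrMl; last lra.
by rewrite mulrA -expr2.
Qed.

Lemma beta_n_eq0 : (1 <= n)%N -> beta n = 0.
Proof.
move=> n1; have nn : (1 <= n <= n)%N by rewrite n1 leqnn.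
have [b0] := beta_def _ nn; have phi0 : 0 <= phi R by have := phi_gt1 R; lra.
rewrite /Expect.
under eq_integral => w _
  do rewrite ymax_n_eq0 sub0r max_r ?oppr_le0 ?mulr_ge0 //.
by rewrite integral0 => -[].
Qed.

Lemma algv_ge0 tau m k w : (1 <= k)%N -> (k + m <= n.+1)%N ->
  0 <= algv X tau m k w.
Proof.
elim: m k => [|m IH] k //= k1 km.
by case: ifP => _; [apply: Xnneg | apply: IH]; lia.
Qed.

Definition threshold s := Num.max (alpha P n X s) (beta s).

Section induction_step.
Variables (j m : nat).
Hypotheses (j2 : (2 <= j)%N) (jm : (j.+1 + m <= n.+1)%N).

Let A := X j @^-1` `]-oo, threshold j[.
Let B := X j @^-1` `[threshold j, +oo[.
Let excess w := if threshold j <= X j w then X j w - beta j else 0.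

Let jn : (1 <= j <= n)%N. Proof. lia. Qed.
Let j1n : (1 <= j.-1 <= n)%N. Proof. lia. Qed.

Let beta_le_tau : beta j <= threshold j.
Proof. by rewrite le_max lexx orbT. Qed.

Let excess_ge0 w : 0 <= excess w.
Proof.
by rewrite /excess; case: ifP => // tX; rewrite subr_ge0 (le_trans beta_le_tau).
Qed.

Let measurable_excess : measurable_fun setT excess.
Proof.
apply: measurable_fun_ifT.
- by apply: measurable_fun_ler => //; exact: measurable_cst.
- by apply: measurable_funB => //; exact: measurable_cst.
- exact: measurable_cst.
Qed.

Lemma beta_pred_le_excess :
  ((beta j.-1)%:E <= \int[P]_w (excess w)%:E + (beta j)%:E)%E.
Proof.
have [b0 bE] := beta_def _ jn; have [c0 cE] := beta_def _ j1n.
have phi1 := phi_gt1 R.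
have [cb|bc] := leP (beta j.-1) (beta j).
  rewrite -[X in (X <= _)%E]add0e; apply: leeD; last by rewrite lee_fin.
  by apply: integral_ge0 => w _; rewrite lee_fin.
have tau_le : threshold j <= phi R * beta j.-1.
  rewrite ge_max; apply/andP; split; last by nra.
  by apply: (le_trans (alpha_le_phi_beta _ jn)); rewrite ler_pM2l; lra.
rewrite -cE -bE /Expect -ge0_integralD //; first last.
- by move=> w _; rewrite lee_fin le_max lexx orbT.
- by apply/measurable_EFinP; exact: measurable_excess.
- by move=> w _; rewrite lee_fin excess_ge0.
apply: ge0_le_integral => //.
- by move=> w _; rewrite lee_fin le_max lexx orbT.
- apply: emeasurable_funD; last exact: measurable_pos_part_ymax.
  by apply/measurable_EFinP; exact: measurable_excess.
move=> w _; rewrite lee_fin ymaxS; last lia.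
rewrite prednK; last lia.
apply: max_sub_le_split.
- exact: ymax_ge0.
- by rewrite beta_le_tau tau_le.
- by rewrite ler_pM2l; lra.
Qed.

Lemma expect_algv_split : Expect P (algv X threshold m.+1 j) =
  (\int[P]_w (excess w)%:E + (beta j)%:E * P B +
   P A * Expect P (algv X threshold m j.+1))%E.
Proof.
have mA : measurable A by apply: measurable_funPTI; exact: measurable_itv.
have mB : measurable B by apply: measurable_funPTI; exact: measurable_itv.
pose next := algv X threshold m j.+1.
have mnext : measurable_fun setT next by exact: measurable_algv.
have next0 w : 0 <= next w by apply: algv_ge0; lia.
have -> : (P A * Expect P next = \int[P]_(w in A) (next w)%:E)%E.
  rewrite (ge0_integral_indep _ _ mA mnext next0) // => r r0.
  by apply: (algv_gt_indep_box Xindep) => //; lia.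
rewrite (integral_mkcond A) /Expect.
have nextA0 w : (0 <= ((EFin \o next) \_ A) w)%E.
  by rewrite patchE; case: ifP => _; rewrite /= ?lee_fin.
have mnextA : measurable_fun setT ((EFin \o next) \_ A).
  apply/(measurable_restrictT _ mA).1.
  by apply: (measurable_funS measurableT) => //; exact/measurable_EFinP.
have indB0 w : (0 <= (beta j * \1_B w)%:E)%E.
  by rewrite lee_fin mulr_ge0 // ?indicE //; have [] := beta_def _ jn.
have mindB : measurable_fun setT (fun w => (beta j * \1_B w)%:E).
  apply/measurable_EFinP; apply: measurable_funM; first exact: measurable_cst.
  exact: measurable_indic.
transitivity (\int[P]_w ((excess w)%:E + (beta j * \1_B w)%:E +
                          ((EFin \o next) \_ A) w))%E.
  apply: eq_integral => w _; rewrite /= patchE indicE /excess /A /B.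
  have [tX|Xt] := leP (threshold j) (X j w).
  - rewrite mem_set; last by rewrite /= in_itv /= andbT.
    rewrite (@memNset _ (X j @^-1` _)); last by rewrite /= in_itv /= ltNge tX.
    by rewrite mulr1 -!EFinD subrK addr0.
  - rewrite (@memNset _ (X j @^-1` _)); last first.
      by rewrite /= in_itv /= andbT leNgt Xt.
    rewrite mem_set; last by rewrite /= in_itv /=.
    by rewrite mulr0 !add0e.
rewrite ge0_integralD //; first last.
- apply: emeasurable_funD => //.
  by apply/measurable_EFinP; exact: measurable_excess.
- by move=> w _; rewrite adde_ge0 // lee_fin.
rewrite ge0_integralD //; first last.
- by apply/measurable_EFinP; exact: measurable_excess.
- by move=> w _; rewrite lee_fin.
congr (_ + _ + _)%E.
under eq_integral => w _ do rewrite EFinM.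
rewrite ge0_integralZl_EFin ?integral_indic ?setIT //.
- by apply/measurable_EFinP; exact: measurable_indic.
- by have [] := beta_def _ jn.
Qed.

Lemma expect_algv_ge_beta_pred :
  ((beta j)%:E <= Expect P (algv X threshold m j.+1))%E ->
  ((beta j.-1)%:E <= Expect P (algv X threshold m.+1 j))%E.
Proof.
move=> IH; apply: (le_trans beta_pred_le_excess).
rewrite expect_algv_split -addeA leeD2l //.
have PAB : (P A + P B = 1)%E.
  rewrite -measureU; first last.
  - apply/seteqP; split => w //=; rewrite /A /B /= !in_itv /= andbT => -[Xt tX].
    by move: (lt_le_trans Xt tX); rewrite ltxx.
  - by apply: measurable_funPTI; exact: measurable_itv.
  - by apply: measurable_funPTI; exact: measurable_itv.
  rewrite [A `|` B](_ : _ = setT); first exact: probability_setT.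
  apply/seteqP; split => w //= _; rewrite /A /B /= !in_itv /= andbT.
  by case: ltP; [left|right].
apply: (@le_trans _ _ ((beta j)%:E * P B + P A * (beta j)%:E)%E).
  by rewrite (muleC (P A)) -ge0_muleDr ?measure_ge0 // addeC PAB mule1.
by rewrite leeD2l // lee_wpmul2l // measure_ge0.
Qed.

End induction_step.

Lemma beta_le_expect_algv m k : (1 <= k)%N -> (k + m = n)%N ->
  ((beta k)%:E <= Expect P (algv X threshold m k.+1))%E.
Proof.
elim: m k => [|m IH] k k1 km.
  rewrite addn0 in km; rewrite km beta_n_eq0; last by rewrite -km.
  by apply: integral_ge0 => w _.
apply: (@expect_algv_ge_beta_pred k.+1 m); [lia|lia|].
by apply: IH; lia.
Qed.

End threshold_guarantee.
Arguments threshold {d T R} P n X beta s.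

Theorem lemma3p2 (d : measure_display) (T : measurableType d) (R : realType)
  (P : probability T R) (n : nat) (X : nat -> {RV P >-> R})
  (beta : nat -> R)
  (Xindep : mutually_independent P n X)
  (Xnneg : forall s w, (1 <= s <= n)%N -> 0 <= X s w)
  (Xint : forall s, (1 <= s <= n)%N -> P.-integrable setT (fun w => (X s w)%:E))
  (beta_def : forall t, (1 <= t <= n)%N ->
     0 <= beta t /\
     Expect P (fun w => Num.max (ymax n X t w - phi R * beta t) 0) = (beta t)%:E)
  (t : nat) (ht : (1 <= t <= n.-1)%N) :
  let tau := fun s => Num.max (alpha P n X s) (beta s) in
  ((beta t)%:E <= Expect P (algv X tau (n - t) t.+1))%E /\
  ((((phi R) ^+ 2)^-1)%:E * Expect P (ymax n X t) <= (beta t)%:E)%E /\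
  ((((phi R) ^+ 2)^-1)%:E * Expect P (ymax n X t) = ((phi R)^-1 * alpha P n X t)%:E)%E.
Proof.
move=> tau; have tn : (1 <= t <= n)%N by lia.
have phi2 : 0 < phi R ^+ 2 by rewrite exprn_gt0 // (lt_trans ltr01 (phi_gt1 R)).
split; first by apply: (beta_le_expect_algv Xindep Xnneg beta_def); lia.
split.
- apply: le_trans (lee_wpmul2l _ (expect_ymax_le beta_def _ tn)) _.
    by rewrite lee_fin invr_ge0 ltW.
  by rewrite -EFinM mulrA mulVf ?mul1r // gt_eqF.
- rewrite -(fineK (expect_ymax_fin beta_def _ tn)) -EFinM /alpha.
  by rewrite mulrA -invfM -expr2.
Qed.
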